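(* Let $0\leq B<1$ and $\Delta\geq3$, and set $d=\Delta-1$. Suppose $R_1,\dots,R_q,C_1,\dots,C_q$ solve the system \[R_i\propto\Big(BC_i+\sum_{j\neq i}C_j\Big)^{d},\qquad C_j\propto\Big(BR_j+\sum_{i\neq j}R_i\Big)^{d}\qquad(i,j\in[q])\] (proportionality constants independent of $i$, resp. $j$) and satisfy $R_i\propto C_i$ for all $i\in[q]$. Then $R_1=\dots=R_q$ and $C_1=\dots=C_q$.
   Context: This system is the tree recursion (fixpoint) system for the antiferromagnetic $q$-state Potts model with parameter $B$ (interaction matrix with diagonal entries $B$ and off-diagonal entries $1$); $B=0$ corresponds to $q$-colorings. *)

From mathcomp Require Import all_boot all_order all_algebra.
Set Implicit Arguments. Unset Strict Implicit. Unset Printing Implicit Defensive.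
Import Order.TTheory GRing.Theory Num.Theory.
Local Open Scope ring_scope.

Definition potts_field (R : realFieldType) (q : nat) (B : R) (X : 'I_q -> R)
  (i : 'I_q) : R :=
  B * X i + \sum_(j < q | j != i) X j.

(* Writing S = \sum_k X_k, the field is S - (1 - B) X_i, which strictly
   decreases in X_i since B < 1.  If C_i < C_j, the first recursion makes
   R_i > R_j (with d > 0 and a positive constant), whereas R ∝ C with a
   positive constant makes R_i < R_j.  Hence C, and with it R, is constant. *)
From mathcomp Require Import all_boot all_order all_algebra.
From mathcomp Require Import lra.
Import Order.TTheory GRing.Theory Num.Theory.
Local Open Scope ring_scope.

Lemma potts_fieldE (R : realFieldType) (q : nat) (B : R) (X : 'I_q -> R) i :
  potts_field B X i = \sum_k X k - (1 - B) * X i.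
Proof. by rewrite /potts_field [in RHS](bigD1 i) //=; lra. Qed.

Section PositiveVector.

Variables (R : realFieldType) (q : nat) (B : R) (X : 'I_q -> R).
Hypotheses (B_ge0 : 0 <= B) (X_gt0 : forall k, 0 < X k).

Lemma potts_field_ge0 i : 0 <= potts_field B X i.
Proof.
apply: addr_ge0; first by rewrite mulr_ge0 // ltW.
by apply: sumr_ge0 => k _; apply: ltW.
Qed.

Lemma ltr_potts_fieldX (n : nat) i j : B < 1 -> (0 < n)%N ->
  X i < X j -> potts_field B X j ^+ n < potts_field B X i ^+ n.
Proof.
move=> B_lt1 n_gt0 lt_ij; rewrite ltrXn2r ?potts_field_ge0 -?lt0n //.
rewrite !potts_fieldE ltrD2l ltrN2 ltr_pM2l //; lra.
Qed.

End PositiveVector.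

Lemma gt0_scale_of {R : realDomainType} {c y : R} :
  0 <= y -> 0 < c * y -> 0 < c.
Proof.
move=> y_ge0; apply: contraTT; rewrite -!leNgt => c_le0.
by rewrite mulr_le0_ge0.
Qed.

Lemma proportional_potts_fixpoint_le {R : realFieldType} {q n : nat} {B : R}
    {Rv Cv : 'I_q -> R} {lam kap : R} :
  0 <= B -> B < 1 -> (0 < n)%N ->
  (forall i, 0 < Rv i) -> (forall i, 0 < Cv i) ->
  (forall i, Rv i = lam * potts_field B Cv i ^+ n) ->
  (forall i, Rv i = kap * Cv i) ->
  forall i j, Cv i <= Cv j.
Proof.
move=> B_ge0 B_lt1 n_gt0 Rv_gt0 Cv_gt0 Rv_rec Rv_prop i j.
rewrite leNgt; apply/negP => lt_ji.
have field_ge0 k : 0 <= potts_field B Cv k ^+ n.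
  by rewrite exprn_ge0 ?potts_field_ge0.
have lam_gt0 : 0 < lam.
  by apply: (gt0_scale_of (field_ge0 i)); rewrite -Rv_rec.
have kap_gt0 : 0 < kap.
  by apply: (gt0_scale_of (ltW (Cv_gt0 i))); rewrite -Rv_prop.
have Rv_lt_ji : Rv j < Rv i by rewrite !Rv_prop ltr_pM2l.
have Rv_lt_ij : Rv i < Rv j.
  by rewrite !Rv_rec ltr_pM2l // ltr_potts_fieldX.
by move: (lt_trans Rv_lt_ij Rv_lt_ji); rewrite ltxx.
Qed.

Theorem lemma25 (R : realFieldType) (q Delta : nat) (B : R)
  (Rv Cv : 'I_q -> R) :
  0 <= B -> B < 1 -> (3 <= Delta)%N ->
  (forall i, 0 < Rv i) -> (forall i, 0 < Cv i) ->
  (exists lam : R, forall i, Rv i = lam * (potts_field B Cv i) ^+ Delta.-1) ->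
  (exists mu : R, forall j, Cv j = mu * (potts_field B Rv j) ^+ Delta.-1) ->
  (exists kap : R, forall i, Rv i = kap * Cv i) ->
  (forall i j, Rv i = Rv j) /\ (forall i j, Cv i = Cv j).
Proof.
move=> B_ge0 B_lt1 Delta_ge3 Rv_gt0 Cv_gt0 [lam Rv_rec] _ [kap Rv_prop].
have d_gt0 : (0 < Delta.-1)%N by case: (Delta) Delta_ge3 => [|[|]].
have Cv_le := proportional_potts_fixpoint_le B_ge0 B_lt1 d_gt0
  Rv_gt0 Cv_gt0 Rv_rec Rv_prop.
have Cv_const i j : Cv i = Cv j by apply/le_anti; rewrite !Cv_le.
by split=> i j; rewrite ?Rv_prop (Cv_const i j).
Qed.
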